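(* Let $\vec G=(V,E,\omega)$ be a weighted directed Eulerian graph with positive in-degrees $\deg^-(v)$, and for $S\subseteq V$ let $\Psi(S)=\sum_{v\in S}\sum_{(u,v)\in E,\,u\in S}\frac{\omega((u,v))}{\deg^-(v)}$. If $S\neq\emptyset$ satisfies $\Psi(S)/|S|\le\frac12$, then there is a subset $S'\subseteq S$ with $|S'|\ge\frac14|S|$ such that every $s\in S'$ satisfies $$\sum_{(v,s)\in E,\,v\notin S}\omega((v,s))\ge\frac14\deg^-(s).$$
   Context: $\deg^-(v)$ denotes the weighted in-degree of $v$ in $\vec G$; Eulerian means in-degree equals out-degree at every vertex. *)

From mathcomp Require Import all_boot all_order all_algebra.
Set Implicit Arguments. Unset Strict Implicit. Unset Printing Implicit Defensive.
Import Order.TTheory GRing.Theory Num.Theory.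
Local Open Scope ring_scope.

(* A weighted directed graph on a finite vertex set V is encoded by a weight
   function w : V -> V -> R with w u v >= 0; (u,v) is an edge iff w u v > 0
   (absent edges have weight 0, so sums over edges = sums over all pairs). *)

Definition nonneg_weights (R : realFieldType) (V : finType) (w : V -> V -> R) :=
  forall u v, 0 <= w u v.

Definition indeg (R : realFieldType) (V : finType) (w : V -> V -> R) (v : V) : R :=
  \sum_(u : V) w u v.
Definition outdeg (R : realFieldType) (V : finType) (w : V -> V -> R) (v : V) : R :=
  \sum_(u : V) w v u.

Definition eulerian (R : realFieldType) (V : finType) (w : V -> V -> R) :=
  forall v, indeg w v = outdeg w v.

Definition Psi (R : realFieldType) (V : finType) (w : V -> V -> R) (S : {set V}) : R :=
  \sum_(v in S) \sum_(u in S) w u v / indeg w v.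

From mathcomp Require Import all_boot all_order all_algebra.
From mathcomp Require Import lra.
Import Order.TTheory GRing.Theory Num.Theory.
Local Open Scope ring_scope.

(* Call s in S bad if less than a quarter
   of its in-weight comes from outside S; then at least three quarters of it
   comes from inside, i.e. the term of s in Psi(S) is at least 3/4.  Hence
   3/4 #|bad| <= Psi(S) <= #|S|/2, so at most two thirds of S is bad and the
   good vertices form at least a third of S. *)

Lemma card_setD_mul_le_sum (R : realFieldType) (T : finType) (A B : {set T})
    (f : T -> R) (c : R) :
    (forall x, x \in A -> 0 <= f x) -> (forall x, x \in A :\: B -> c <= f x) ->
  #|A :\: B|%:R * c <= \sum_(x in A) f x.
Proof.
move=> f_ge0 f_ge_c.
rewrite (big_setID B) /= -[X in X <= _]add0r; apply: lerD.
  by apply: sumr_ge0 => x /setIP[xA _]; apply: f_ge0.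
by rewrite mulr_natl -sumr_const; apply: ler_sum.
Qed.

Section InWeightShare.

Variables (R : realFieldType) (V : finType) (w : V -> V -> R).
Hypotheses (hw : nonneg_weights w) (hpos : forall v : V, 0 < indeg w v).

Definition share_from (S : {set V}) (v : V) : R :=
  (\sum_(u in S) w u v) / indeg w v.

Lemma Psi_share (S : {set V}) : Psi w S = \sum_(v in S) share_from S v.
Proof. by apply: eq_bigr => v _; rewrite /share_from mulr_suml. Qed.

Lemma indeg_setC_split (S : {set V}) (v : V) :
  indeg w v = \sum_(u in S) w u v + \sum_(u in ~: S) w u v.
Proof.
rewrite /indeg (bigID (mem S)) /=.
by congr (_ + _); apply: eq_bigl => u; rewrite inE.
Qed.

Lemma share_from_ge0 (S : {set V}) (v : V) : 0 <= share_from S v.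
Proof.
by apply: divr_ge0; [apply: sumr_ge0 => u _; apply: hw | apply: ltW].
Qed.

Lemma share_from_ge3_4 (S : {set V}) (v : V) :
  \sum_(u in ~: S) w u v < indeg w v / 4 -> 3 / 4 <= share_from S v.
Proof.
rewrite /share_from ler_pdivlMr // (indeg_setC_split S v).
have := hpos v; rewrite (indeg_setC_split S v); lra.
Qed.

End InWeightShare.

Theorem lemmaC3 (R : realFieldType) (V : finType) (w : V -> V -> R)
  (hw : nonneg_weights w) (heul : eulerian w)
  (hpos : forall v : V, 0 < indeg w v)
  (S : {set V}) (hS : S != set0)
  (hPsi : Psi w S / #|S|%:R <= 1 / 2) :
  exists S' : {set V}, S' \subset S /\ (#|S|%:R / 4 : R) <= #|S'|%:R /\
    forall s, s \in S' -> \sum_(v in ~: S) w v s >= indeg w s / 4.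
Proof.
set S' := [set s in S | indeg w s / 4 <= \sum_(v in ~: S) w v s].
have S'S : S' \subset S by apply/subsetP => s /setIdP[].
exists S'; split => //; split; last by move=> s /setIdP[].
have cardS_gt0 : (0 : R) < #|S|%:R by rewrite ltr0n card_gt0.
have Psi_le : Psi w S <= #|S|%:R / 2.
  by move: hPsi; rewrite ler_pdivrMr // mul1r mulrC.
have bad_le_Psi : #|S :\: S'|%:R * (3 / 4) <= Psi w S.
  rewrite Psi_share; apply: card_setD_mul_le_sum => v.
    by move=> _; apply: share_from_ge0.
  case/setDP=> vS; rewrite inE vS -ltNge.
  exact: share_from_ge3_4.
have cardS : (#|S'|%:R + #|S :\: S'|%:R : R) = #|S|%:R.
  by rewrite -natrD -{1}(setIidPr S'S) cardsID.
lra.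
Qed.
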